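(* Let $G=(V,E)$ be an undirected unweighted graph with $n$ vertices, let $f$ be a positive integer with $n>f$, and let $c\ge1$ be a constant. Let $A_0=V$ and, for $i=1,\dots,f-1$, let $A_i$ be obtained by including each vertex independently with probability $p_i=\min((c+3)n^{-i/f}\log n,1)$ (all choices independent). Say the sampling is good if (1) for every $i\in\{1,\dots,f-1\}$ and every $v\in V$, $Q_i(v)\cap A_i\neq\emptyset$, and (2) for every $i\in\{0,\dots,f-1\}$ and every $v\in V$, $|Q_{i+1}(v)\cap A_i|\le\lceil 12(c+3)n^{1/f}\log n\rceil$. Then the sampling is good with probability at least $1-n^{-c}$.
   Context: Logarithms are base $2$. Vertices have distinct identifiers $ID(\cdot)$ and $d(\cdot,\cdot)$ is hop distance. A vertex $x$ is closer to $v$ than $y$ if $d(v,x)<d(v,y)$, or $d(v,x)=d(v,y)$ and $ID(x)<ID(y)$. For $i\in\{1,\dots,f\}$ and $v\in V$, $Q_i(v)$ is the set of the $\lceil n^{i/f}\rceil$ vertices closest to $v$ in $G$. *)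

From HB Require Import structures.
From mathcomp Require Import all_boot all_order all_algebra.
From mathcomp Require Import reals exp.
Set Implicit Arguments. Unset Strict Implicit. Unset Printing Implicit Defensive.
Import Order.TTheory GRing.Theory Num.Theory.
Local Open Scope ring_scope.

Section Defs.
Variable n : nat.
(* An undirected unweighted graph on V = 'I_n is a symmetric irreflexive relation e. *)
Variable e : rel 'I_n.

Fixpoint ball (k : nat) (v : 'I_n) : {set 'I_n} :=
  match k with
  | 0 => [set v]
  | k'.+1 => ball k' v :|: [set y | [exists x in ball k' v, e x y]]
  end.

(* hop distance; an unreachable vertex gets distance n (> every finite distance),
   playing the role of +infinity *)
Definition dist (v x : 'I_n) : nat := find (fun k => x \in ball k v) (iota 0 n).

Definition closer (ID : 'I_n -> nat) (v x y : 'I_n) : bool :=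
  (dist v x < dist v y)%N || ((dist v x == dist v y) && (ID x < ID y)%N).

Definition closestK (ID : 'I_n -> nat) (K : nat) (v : 'I_n) : {set 'I_n} :=
  [set x | (#|[set y | closer ID v y x]| < K)%N].
End Defs.

Section Sampling.
Variable R : realType.
Variables (n f : nat).

Definition log2 (x : R) : R := ln x / ln 2.

Definition Qset (e : rel 'I_n) (ID : 'I_n -> nat) (i : nat) (v : 'I_n) : {set 'I_n} :=
  closestK e ID `|Num.ceil ((n%:R : R) `^ (i%:R / f%:R))|%N v.

Definition samp_p (c : R) (i : nat) : R :=
  Num.min ((c + 3) * (n%:R `^ (- (i%:R / f%:R))) * log2 n%:R) 1.

(* An outcome: w j is the sampled set A_{j+1}, for j < f-1. *)
Definition outcome := {ffun 'I_f.-1 -> {set 'I_n}}.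

Definition Aset (w : outcome) (i : nat) : {set 'I_n} :=
  match i with
  | 0 => setT
  | i'.+1 => [set v | [exists j : 'I_f.-1, (val j == i') && (v \in w j)]]
  end.

Definition weight (c : R) (w : outcome) : R :=
  \prod_(j : 'I_f.-1) \prod_(v : 'I_n)
     (if v \in w j then samp_p c j.+1 else 1 - samp_p c j.+1).

Definition good (e : rel 'I_n) (ID : 'I_n -> nat) (c : R) (w : outcome) : bool :=
  [forall i : 'I_f, forall v : 'I_n,
     (0 < (i : nat))%N ==> (Qset e ID i v :&: Aset w i != set0)] &&
  [forall i : 'I_f, forall v : 'I_n,
     (#|Qset e ID i.+1 v :&: Aset w i|%:Z
        <= Num.ceil (12 * (c + 3) * (n%:R `^ (1 / f%:R)) * log2 n%:R))%R].

Definition prob_good (e : rel 'I_n) (ID : 'I_n -> nat) (c : R) : R :=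
  \sum_(w : outcome | good e ID c w) weight c w.
End Sampling.

From mathcomp Require Import all_boot all_order all_algebra.
From mathcomp Require Import reals sequences exp.
From mathcomp Require Import ring lra.

(* Each of the at most 2fn requirements fails with probability at most
   n^-(c+3), so by the union bound the sampling is bad with probability at most
   2fn n^-(c+3) <= n^-c.  As identifiers are distinct, "closer to v" is a strict
   total order, so Q_i(v) has exactly k_i = ceil(n^(i/f)) elements.  Hence
   Q_i(v) misses A_i with probability (1 - p_i)^k_i <= exp(-p_i n^(i/f)), which
   is 0 or exp(-(c+3) log n).  Writing m for one more than the load bound,
   |Q_(i+1)(v) :&: A_i| reaches m only if one of the C(k_(i+1), m) m-subsets of
   Q_(i+1)(v) is sampled, which has probability at most (k_(i+1) p_i)^m / m!
   <= e^(-m/3) because k_(i+1) p_i <= m/6. *)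

Set Implicit Arguments.
Unset Strict Implicit.
Unset Printing Implicit Defensive.

Import Order.TTheory GRing.Theory Num.Theory.

Section ClosestVertices.
Variables (n : nat) (e : rel 'I_n) (ID : 'I_n -> nat) (v : 'I_n).
Hypothesis ID_inj : injective ID.
Local Notation closer := (closer e ID v).

Lemma closer_irr x : ~~ closer x x.
Proof. by rewrite /closer ltnn eqxx ltnn. Qed.

Lemma closer_trans y x z : closer x y -> closer y z -> closer x z.
Proof.
rewrite /closer.
case/orP=> [lt_xy|/andP[/eqP eq_xy lt_xy]]; case/orP=> [lt_yz|/andP[/eqP eq_yz lt_yz]].
- by rewrite (ltn_trans lt_xy lt_yz).
- by rewrite -eq_yz lt_xy.
- by rewrite eq_xy lt_yz.
- by rewrite eq_xy eq_yz eqxx (ltn_trans lt_xy lt_yz) orbT.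
Qed.

Lemma closer_total x y : x != y -> closer x y || closer y x.
Proof.
move=> neq_xy; rewrite /closer.
have neq_ID : ID x != ID y by apply: contra neq_xy => /eqP /ID_inj ->.
case: ltngtP => //= _.
by case: ltngtP neq_ID => // ->; rewrite eqxx.
Qed.

Definition rank x := #|[set y | closer y x]|.

Lemma closer_rank x y : closer x y -> (rank x < rank y)%N.
Proof.
move=> cl_xy; apply: proper_card; apply/properP; split.
  by apply/subsetP=> z; rewrite !inE => /closer_trans; apply.
by exists x; rewrite !inE // closer_irr.
Qed.

Lemma rank_inj : injective rank.
Proof.
move=> x y eq_rank; apply/eqP; apply/negPn/negP => /closer_total.
by case/orP=> /closer_rank; rewrite eq_rank ltnn.
Qed.

Lemma rank_lt x : (rank x < n)%N.
Proof.
rewrite -[n]card_ord; apply: proper_card; apply/properP; split; first exact/subsetP.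
by exists x; rewrite !inE // closer_irr.
Qed.

Definition ord_rank x : 'I_n := Ordinal (rank_lt x).

Lemma card_closestK K : (K <= n)%N -> #|closestK e ID K v| = K.
Proof.
move=> le_Kn.
have -> : closestK e ID K v = ord_rank @^-1: [set widen_ord le_Kn k | k in 'I_K].
  apply/setP=> x; rewrite !inE; apply/idP/imsetP => [lt_xK | [k _ /(congr1 val) /= eq_k]].
    by exists (Ordinal lt_xK) => //; apply: val_inj.
  by move: (ltn_ord k); rewrite -eq_k.
rewrite card_preimset; last by move=> x y [] /rank_inj.
by rewrite card_imset ?card_ord // => k l [] /val_inj.
Qed.

Lemma card_closestK_le K : (#|closestK e ID K v| <= K)%N.
Proof.
have [le_Kn | lt_nK] := leqP K n; first by rewrite card_closestK.
by apply: leq_trans (ltnW lt_nK); rewrite -[leqRHS]card_ord max_card.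
Qed.

End ClosestVertices.

Local Open Scope ring_scope.

Section SamplingMeasure.
Variables (R : numDomainType) (J T : finType) (p : J -> R).

Definition coin (j : J) (b : bool) : R := if b then p j else 1 - p j.

Definition sampling_weight (w : {ffun J -> {set T}}) : R :=
  \prod_j \prod_x coin j (x \in w j).

Definition prob (E : pred {ffun J -> {set T}}) : R :=
  \sum_(w | E w) sampling_weight w.

Lemma eq_prob (E1 E2 : pred {ffun J -> {set T}}) : E1 =1 E2 -> prob E1 = prob E2.
Proof. exact: eq_bigl. Qed.

Lemma sum_prod_membership (g : J -> T -> bool -> R) :
  \sum_(w : {ffun J -> {set T}}) \prod_j \prod_x g j x (x \in w j)
  = \prod_j \prod_x (g j x true + g j x false).
Proof.
have expand j : \prod_x (g j x true + g j x false)
                = \sum_(S : {set T}) \prod_x g j x (x \in S).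
  by rewrite bigA_distr; apply: eq_bigr => S _; apply: eq_bigr => x _; case: (x \in S).
by rewrite (eq_bigr _ (fun j _ => expand j)) bigA_distr_bigA.
Qed.

Lemma sum_sampling_weight : \sum_w sampling_weight w = 1.
Proof.
rewrite (sum_prod_membership (fun j _ => coin j)) big1 // => j _.
by rewrite big1 // => x _; rewrite /coin addrC subrK.
Qed.

Lemma prob_pattern (j : J) (S : {set T}) (b : T -> bool) :
  prob (fun w => [forall x in S, (x \in w j) == b x]) = \prod_(x in S) coin j (b x).
Proof.
pose g j' x (y : bool) :=
  if (j' == j) && (x \in S) then (y == b x)%:R * coin j' y else coin j' y.
transitivity (\sum_(w : {ffun J -> {set T}}) \prod_j' \prod_x g j' x (x \in w j')).
  rewrite /prob big_mkcond; apply: eq_bigr => w _.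
  case: ifP => [/forall_inP w_b | /negbT /forall_inPn [x xS /negbTE w_b]].
    apply: eq_bigr => j' _; apply: eq_bigr => x _; rewrite /g.
    by case: eqP => [-> /=|//]; case: ifP => // /w_b ->; rewrite mul1r.
  rewrite (bigD1 j) //= (bigD1 x) //=.
  by rewrite /g eqxx xS w_b !mul0r.
rewrite (sum_prod_membership g) (bigD1 j) //= [X in _ * X]big1 ?mulr1; last first.
  by move=> j' /negbTE nj; rewrite big1 // => x _; rewrite /g nj /coin addrC subrK.
rewrite [RHS]big_mkcond; apply: eq_bigr => x _; rewrite /g eqxx /=.
by case: (x \in S); case: (b x); rewrite ?mul1r ?mul0r ?addr0 ?add0r // /coin addrC subrK.
Qed.

Lemma prob_setI_eq0 (j : J) (Q : {set T}) :
  prob (fun w => Q :&: w j == set0) = (1 - p j) ^+ #|Q|.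
Proof.
rewrite -[RHS]prodr_const -(prob_pattern j Q (fun=> false)).
apply: eq_bigl => w; apply/eqP/forall_inP => [/setP Qw x xQ | Qw].
  by move: (Qw x); rewrite !inE xQ /= => ->.
by apply/setP => x; rewrite !inE; case: (boolP (x \in Q)) => // /Qw /eqP.
Qed.

Lemma prob_subset (j : J) (S : {set T}) :
  prob (fun w => S \subset w j) = p j ^+ #|S|.
Proof.
rewrite -[RHS]prodr_const -(prob_pattern j S (fun=> true)).
apply: eq_bigl => w; apply/subsetP/forall_inP => Sw x /Sw; first by move->.
by move/eqP.
Qed.

Hypothesis p_01 : forall j, 0 <= p j <= 1.

Lemma sampling_weight_ge0 w : 0 <= sampling_weight w.
Proof.
apply: prodr_ge0 => j _; apply: prodr_ge0 => x _; have /andP[p_ge0 p_le1] := p_01 j.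
by rewrite /coin; case: ifP; rewrite ?subr_ge0.
Qed.

(* An outcome in the event contains at least one sampled [m]-subset of [Q]. *)
Lemma prob_card_setI_ge (j : J) (Q : {set T}) (m : nat) :
  prob (fun w => m <= #|Q :&: w j|)%N <= 'C(#|Q|, m)%:R * p j ^+ m.
Proof.
pose draws (A : {set T}) := [set S : {set T} | S \subset A & #|S| == m].
apply: (@le_trans _ _ (\sum_(w : {ffun J -> {set T}})
                          \sum_(S in draws Q | S \subset w j) sampling_weight w)).
  rewrite /prob [leLHS]big_mkcond; apply: ler_sum => w _.
  rewrite sumr_const; case: ifP => m_le; last exact: mulrn_wge0 (sampling_weight_ge0 w).
  rewrite -mulr_natr ler_peMr ?sampling_weight_ge0 // (ler_nat R 1).
  have -> : #|[pred S in draws Q | S \subset w j]| = #|draws (Q :&: w j)|.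
    by apply: eq_card => S; rewrite !inE subsetI andbAC.
  by rewrite cards_draws bin_gt0.
rewrite (exchange_big_dep (mem (draws Q))) /= => [|w S _ /andP[] //].
rewrite mulr_natl -cards_draws -sumr_const; apply: ler_sum => S S_draw.
have /andP[_ /eqP <-] : (S \subset Q) && (#|S| == m) by rewrite inE in S_draw.
rewrite -prob_subset (_ : \sum_(w | _) _ = prob (fun w => S \subset w j)) //.
by apply: eq_bigl => w; rewrite S_draw.
Qed.

End SamplingMeasure.

Lemma ler_sum_cover (R : numDomainType) (U I : finType) (wt : U -> R)
    (P : pred U) (E : I -> pred U) :
  (forall u, 0 <= wt u) -> (forall u, P u -> exists k, E k u) ->
  \sum_(u | P u) wt u <= \sum_k \sum_(u | E k u) wt u.
Proof.
move=> wt_ge0 P_cover.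
under [leRHS]eq_bigr do rewrite big_mkcond.
rewrite exchange_big /= [leLHS]big_mkcond /=; apply: ler_sum => u _.
case: ifP => [/P_cover [k Eku] | _]; last by apply: sumr_ge0 => k _; case: ifP.
by rewrite (bigD1 k) //= Eku lerDl; apply: sumr_ge0 => l _; case: ifP.
Qed.

Lemma ffact_le_expn s m : (s ^_ m <= s ^ m)%N.
Proof.
rewrite ffact_prod -[X in (_ <= _ ^ X)%N](card_ord m) -prod_nat_const.
by apply: leq_prod => i _; apply: leq_subr.
Qed.

Lemma bin_mul_expr_le (R : numFieldType) (s m : nat) (q : R) : 0 <= q ->
  'C(s, m)%:R * q ^+ m <= (s%:R * q) ^+ m / m`!%:R.
Proof.
move=> q_ge0; rewrite exprMn mulrAC ler_wpM2r ?exprn_ge0 //.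
rewrite ler_pdivlMr ?ltr0n ?fact_gt0 // -natrX -natrM ler_nat bin_ffact.
exact: ffact_le_expn.
Qed.

Section ExpBounds.
Variable R : realType.

Lemma ln2_gt0 : 0 < ln (2 : R).
Proof. by apply: ln_gt0; lra. Qed.

Lemma ln2_le1 : ln (2 : R) <= 1.
Proof. by have := @le_ln1Dx R 1; rewrite [1 + 1]/2%:R; apply; lra. Qed.

Lemma expR_mul1B_le1 (t : R) : expR t * (1 - t) <= 1.
Proof.
by rewrite -[leRHS](expRxMexpNx_1 t) ler_wpM2l ?expR_ge0 //; apply: expR_ge1Dx.
Qed.

Lemma expR_5_6_le3 : expR (5 / 6) <= 3 :> R.
Proof.
have half : expR (5 / 6) = expR (5 / 12) ^+ 2 :> R.
  by rewrite -expRM_natl; congr expR; field.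
have := expR_mul1B_le1 (5 / 12); have := expR_gt0 (5 / 12 : R).
rewrite half; nra.
Qed.

Lemma expr_div_fact_le_expR (x : R) m : 0 <= x -> x ^+ m / m`!%:R <= expR x.
Proof.
case: m => [|m] x_ge0; last by have := expR_ge1Dxn m x_ge0; lra.
by rewrite expr0 fact0 divr1; have := expR_ge1Dx x; lra.
Qed.

(* Via [x^m/m! <= e^x] at [x = 3r]: [r^m/m! <= e^(m/2) / 3^m <= e^(-m/3)]. *)
Lemma expr_div_fact_le_expRN (r : R) m : 0 <= r -> 6 * r <= m%:R ->
  r ^+ m / m`!%:R <= expR (- (m%:R / 3)).
Proof.
move=> r_ge0 r_le.
have pow3_gt0 : 0 < 3 ^+ m :> R by apply: exprn_gt0.
rewrite -(ler_pM2l pow3_gt0); apply: (@le_trans _ _ (expR (m%:R / 2))).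
  rewrite mulrA -exprMn; apply: le_trans (expr_div_fact_le_expR (x := 3 * r) m _) _.
    by apply: mulr_ge0.
  by rewrite ler_expR; lra.
have -> : expR (m%:R / 2) = expR (5 / 6) ^+ m * expR (- (m%:R / 3)) :> R.
  by rewrite -expRM_natl -expRD; congr expR; field.
rewrite ler_wpM2r ?expR_ge0 //; apply: lerXn2r; rewrite ?nnegrE ?expR_ge0 //.
exact: expR_5_6_le3.
Qed.

End ExpBounds.

Section SamplingBounds.
Variables (R : realType) (n f : nat) (c : R).
Hypotheses (f_gt0 : (0 < f)%N) (f_lt_n : (f < n)%N) (c_ge1 : 1 <= c).

Local Notation p := (samp_p n f c).
Local Notation L := (log2 (n%:R : R)).

Let n_gt0 : (0 < n)%N := ltn_trans f_gt0 f_lt_n.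

Lemma natr_n_ge2 : (2 : R) <= n%:R.
Proof. by rewrite (ler_nat R 2); apply: leq_trans f_lt_n. Qed.

Lemma ln2_le_ln_n : ln (2 : R) <= ln n%:R.
Proof. by rewrite ler_ln ?posrE ?natr_n_ge2 //; apply: lt_le_trans natr_n_ge2. Qed.

Lemma log2_ge1 : 1 <= L.
Proof. by rewrite /log2 ler_pdivlMr ?ln2_gt0 // mul1r ln2_le_ln_n. Qed.

Lemma ln_le_log2 : ln n%:R <= L.
Proof.
rewrite /log2 ler_pdivlMr ?ln2_gt0 //.
have := ln2_le1 R; have := ln2_gt0 R; have := ln2_le_ln_n; nra.
Qed.

Lemma log_factor_ge4 : 4 <= (c + 3) * L.
Proof. by have := c_ge1; have := log2_ge1; nra. Qed.

Definition npow (k : nat) : R := n%:R `^ (k%:R / f%:R).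

Definition qsize (k : nat) : nat := `|Num.ceil (npow k)|%N.

Lemma npow_ge1 k : 1 <= npow k.
Proof.
have n_ge2 := natr_n_ge2.
by rewrite /npow -[leLHS](powRr0 n%:R) ler_powR ?divr_ge0 //; lra.
Qed.

Lemma npow_le k : (k <= f)%N -> npow k <= n%:R.
Proof.
move=> le_kf; have n_ge2 := natr_n_ge2.
rewrite /npow -[leRHS](@powRr1 _ n%:R); last by lra.
by rewrite ler_powR ?ler_pdivrMr ?ltr0n // ?mul1r ?ler_nat //; lra.
Qed.

Lemma npowS k : npow k.+1 = npow k * npow 1.
Proof.
rewrite /npow -powRD; last by rewrite pnatr_eq0 gtn_eqF ?implybT.
by rewrite -mulrDl -natrD addn1.
Qed.

Lemma npow_gt0 k : 0 < npow k.
Proof. exact: lt_le_trans (npow_ge1 k). Qed.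

Lemma samp_pE k : p k = Num.min ((c + 3) * L / npow k) 1.
Proof. by rewrite /samp_p powRN mulrAC. Qed.

Lemma samp_p_ge0 k : 0 <= p k.
Proof.
rewrite samp_pE le_min ler01 andbT divr_ge0 ?(ltW (npow_gt0 k)) //.
exact: le_trans (ler0n _ 4) log_factor_ge4.
Qed.

Lemma samp_p_le1 k : p k <= 1.
Proof. by rewrite samp_pE ge_min lexx orbT. Qed.

Lemma samp_p_mul_npow_le k : p k * npow k <= (c + 3) * L.
Proof. by rewrite -ler_pdivlMr ?npow_gt0 // samp_pE ge_min lexx.
Qed.

Lemma samp_p_mul_npow k : p k != 1 -> p k * npow k = (c + 3) * L.
Proof.
rewrite samp_pE; case: leP => [_ _ | _ /eqP //].
by rewrite divfK // gt_eqF ?npow_gt0.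
Qed.

Lemma qsizeE k : (qsize k)%:R = (Num.ceil (npow k))%:~R :> R.
Proof.
by rewrite /qsize natr_absz ger0_norm // ceil_ge0; have := npow_ge1 k; lra.
Qed.

Lemma qsize_ge k : npow k <= (qsize k)%:R.
Proof. by rewrite qsizeE ceil_ge. Qed.

Lemma qsize_lt k : (qsize k)%:R < npow k + 1.
Proof. by rewrite qsizeE; have := ceilB1_lt (npow k); rewrite intrD; lra. Qed.

Lemma qsize_gt0 k : (0 < qsize k)%N.
Proof. by rewrite -(ltr_nat R); apply: lt_le_trans (npow_gt0 k) (qsize_ge k). Qed.

Lemma qsize_le k : (k <= f)%N -> (qsize k <= n)%N.
Proof.
move=> le_kf; rewrite -(ler_nat R) qsizeE -[n%:R]/(n%:Z%:~R) ler_int ceil_le_int.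
exact: npow_le.
Qed.

Definition tail : R := n%:R `^ (- (c + 3)).

Lemma tailE : tail = expR (- ((c + 3) * ln n%:R)).
Proof. by rewrite /tail /powR pnatr_eq0 gtn_eqF ?mulNr. Qed.

Lemma uncovered_bound k : (1 - p k) ^+ qsize k <= tail.
Proof.
rewrite tailE; have [p_eq1 | p_neq1] := eqVneq (p k) 1.
  by rewrite p_eq1 subrr expr0n gtn_eqF ?qsize_gt0 ?expR_ge0.
have p_npow := samp_p_mul_npow p_neq1.
apply: (@le_trans _ _ (expR (- p k) ^+ qsize k)).
  apply: lerXn2r; rewrite ?nnegrE ?subr_ge0 ?samp_p_le1 ?expR_ge0 //.
  exact: expR_ge1Dx.
rewrite -expRM_natl ler_expR mulrN lerN2.
have := c_ge1; have := qsize_ge k; have := ln_le_log2; have := samp_p_ge0 k; nra.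
Qed.

Definition load_cap : int := Num.ceil (12 * (c + 3) * (n%:R `^ (1 / f%:R)) * L).

Lemma load_capE : load_cap = Num.ceil (12 * ((c + 3) * npow 1 * L)).
Proof. by rewrite /load_cap /npow mulr1n !mulrA. Qed.

Lemma load_cap_ge0 : 0 <= load_cap.
Proof.
rewrite load_capE ceil_ge0.
by have := npow_ge1 1; have := log_factor_ge4; nra.
Qed.

Lemma qsize1_le_load_cap : (qsize 1)%:Z <= load_cap.
Proof.
rewrite load_capE /qsize gez0_abs; last by rewrite ceil_ge0; have := npow_ge1 1; lra.
by apply: le_ceil; have := npow_ge1 1; have := log_factor_ge4; nra.
Qed.

Definition overload : nat := `|load_cap|.+1.

Lemma overload_ge : 12 * ((c + 3) * npow 1 * L) + 1 <= overload%:R.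
Proof.
rewrite -[overload%:R]natr1 lerD2r natr_absz ger0_norm ?load_cap_ge0 //.
by rewrite load_capE ceil_ge.
Qed.

(* [s <= qsize (k+1) < n^(k/f) n^(1/f) + 1] and [p_k n^(k/f) <= (c+3) log n] give
   [s p_k <= Y + 1], where [Y = (c+3) n^(1/f) log n] and [overload >= 12 Y + 1]. *)
Lemma overload_bound k s : (s <= qsize k.+1)%N ->
  'C(s, overload)%:R * p k ^+ overload <= tail.
Proof.
move=> le_s; set Y := (c + 3) * npow 1 * L.
have s_lt : s%:R < npow k * npow 1 + 1.
  by rewrite -npowS; apply: le_lt_trans (qsize_lt _); rewrite ler_nat.
have Y_ge : (c + 3) * L <= Y.
  by have := npow_ge1 1; have := log_factor_ge4; rewrite /Y; nra.
have sp_le : s%:R * p k <= Y + 1.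
  have p_ge0 := samp_p_ge0 k.
  have : s%:R * p k <= (npow k * npow 1 + 1) * p k by rewrite ler_wpM2r // ltW.
  have : npow 1 * (p k * npow k) <= npow 1 * ((c + 3) * L).
    by rewrite ler_wpM2l ?samp_p_mul_npow_le ?ltW ?npow_gt0.
  have := samp_p_le1 k; rewrite /Y; nra.
have := overload_ge; rewrite -/Y => m_ge.
apply: le_trans (bin_mul_expr_le s overload (samp_p_ge0 k)) _.
have sp_ge0 : 0 <= s%:R * p k by rewrite mulr_ge0 ?samp_p_ge0.
have sp_small : 6 * (s%:R * p k) <= overload%:R by have := log_factor_ge4; lra.
apply: le_trans (expr_div_fact_le_expRN sp_ge0 sp_small) _.
rewrite tailE ler_expR lerN2.
by have := ln_le_log2; have := log_factor_ge4; have := c_ge1; nra.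
Qed.

Lemma tail_mulrn_le : tail *+ (f * n * 2) <= n%:R `^ (- c).
Proof.
have -> : n%:R `^ (- c) = tail * n%:R ^+ 3.
  rewrite -powR_mulrn ?ler0n // /tail -powRD; last by rewrite pnatr_eq0 gtn_eqF ?implybT.
  by congr powR; ring.
rewrite -[leLHS]mulr_natr ler_wpM2l ?powR_ge0 // -natrX ler_nat.
apply: (@leq_trans (n * n * n)); last by rewrite !expnS expn0 muln1 mulnA.
by apply: leq_mul; [apply: leq_mul; [exact: ltnW |] | exact: leq_ltn_trans f_gt0 f_lt_n].
Qed.

End SamplingBounds.

Lemma Aset_succ (n f : nat) (w : outcome n f) (j : 'I_f.-1) : Aset w j.+1 = w j.
Proof.
apply/setP => v; rewrite inE; apply/existsP/idP => [[j' /andP[/eqP eq_j]] | v_w].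
  by have -> : j = j' by apply: val_inj.
by exists j; rewrite eqxx.
Qed.

Section Events.
Variables (R : realType) (n f : nat) (e : rel 'I_n) (ID : 'I_n -> nat) (c : R).
Hypotheses (ID_inj : injective ID) (f_gt0 : (0 < f)%N) (f_lt_n : (f < n)%N) (c_ge1 : 1 <= c).

Definition coord_p (j : 'I_f.-1) : R := samp_p n f c j.+1.

Local Notation Pr := (prob coord_p).

Lemma coord_p_01 j : 0 <= coord_p j <= 1.
Proof. by rewrite samp_p_ge0 ?samp_p_le1. Qed.

Definition uncovered (i : nat) (v : 'I_n) (w : outcome n f) : bool :=
  (0 < i)%N && (Qset R f e ID i v :&: Aset w i == set0).

Definition overloaded (i : nat) (v : 'I_n) (w : outcome n f) : bool :=
  ~~ (#|Qset R f e ID i.+1 v :&: Aset w i|%:Z <= load_cap n f c).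

Definition violation (k : 'I_f * 'I_n * bool) : pred (outcome n f) :=
  let: (i, v, b) := k in if b then uncovered i v else overloaded i v.

Lemma not_good_violation w : ~~ good e ID c w -> exists k, violation k w.
Proof.
rewrite negb_and => /orP[] /forallPn [i] /forallPn [v].
  by rewrite negb_imply negbK => bad; exists (i, v, true).
by move=> bad; exists (i, v, false).
Qed.

Lemma prob_uncovered_le (i : nat) v : (i < f)%N -> Pr (uncovered i v) <= tail n c.
Proof.
case: i => [|i] lt_if; first by rewrite /prob big_pred0 ?powR_ge0.
have lt_i : (i < f.-1)%N by rewrite -ltnS prednK.
set Q := Qset R f e ID i.+1 v.
rewrite (@eq_prob _ _ _ _ _ (fun w : outcome n f => Q :&: w (Ordinal lt_i) == set0)).
  by rewrite prob_setI_eq0 card_closestK ?qsize_le ?uncovered_bound // ltnW.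
by move=> w; rewrite /uncovered -(Aset_succ w (Ordinal lt_i)).
Qed.

Lemma prob_overloaded_le (i : nat) v : (i < f)%N -> Pr (overloaded i v) <= tail n c.
Proof.
case: i => [|i] lt_if.
  rewrite /prob big_pred0 ?powR_ge0 // => w; apply/negbTE; rewrite negbK setIT.
  apply: le_trans (qsize1_le_load_cap f_gt0 f_lt_n c_ge1).
  by rewrite lez_nat card_closestK_le.
have lt_i : (i < f.-1)%N by rewrite -ltnS prednK.
set Q := Qset R f e ID i.+2 v.
rewrite (@eq_prob _ _ _ _ _
  (fun w : outcome n f => overload n f c <= #|Q :&: w (Ordinal lt_i)|)%N).
  apply: le_trans (prob_card_setI_ge coord_p_01 _ _ _) _.
  exact: overload_bound (card_closestK_le _ _ _ _).
move=> w; rewrite /overloaded -(Aset_succ w (Ordinal lt_i)).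
by rewrite -[load_cap n f c]gez0_abs ?load_cap_ge0 // lez_nat -ltnNge.
Qed.

Lemma prob_violation_le k : Pr (violation k) <= tail n c.
Proof.
by case: k => [[i v] []]; [apply: prob_uncovered_le | apply: prob_overloaded_le].
Qed.

End Events.

Arguments coord_p [R] n f c j.

Theorem mainTheorem8 (R : realType) (n f : nat) (e : rel 'I_n) (ID : 'I_n -> nat)
  (c : R) :
  symmetric e -> irreflexive e -> injective ID ->
  (0 < f)%N -> (f < n)%N -> 1 <= c ->
  1 - (n%:R : R) `^ (- c) <= prob_good f e ID c.
Proof.
move=> _ _ ID_inj f_gt0 f_lt_n c_ge1.
have p_01 := coord_p_01 f_gt0 f_lt_n c_ge1.
have bad_le : prob (coord_p n f c) (fun w => ~~ good e ID c w) <= (n%:R : R) `^ (- c).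
  have := ler_sum_cover (sampling_weight_ge0 p_01) (@not_good_violation R n f e ID c).
  move=> /le_trans; apply.
  apply: le_trans (tail_mulrn_le c f_gt0 f_lt_n).
  have -> : (f * n * 2)%N = #|{: 'I_f * 'I_n * bool}|.
    by rewrite !card_prod !card_ord card_bool.
  by rewrite -sumr_const; apply: ler_sum => k _; apply: prob_violation_le.
rewrite -[X in X - _ <= _](sum_sampling_weight 'I_n (coord_p n f c)).
by rewrite (bigID (good e ID c)) /= -addrA gerDl subr_le0.
Qed.
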